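(* For every integer $d \geq 2$, the morphism $(\mathbb{C}^* )^2 \to \mathbb{C}^3$, $(x,y) \mapsto (x^{-1} + d y^{-1},\ x + dy,\ x^2 + dy^2)$ is injective. *)

(* complex numbers as R[i] = complex R over a realType R
   (taking R to be the real numbers gives C). *)
From HB Require Import structures.
From mathcomp Require Import all_boot all_order all_algebra.
From mathcomp Require Import complex.
From mathcomp Require Import reals.
Set Implicit Arguments. Unset Strict Implicit. Unset Printing Implicit Defensive.
Import Order.TTheory GRing.Theory Num.Theory.
Local Open Scope ring_scope.

Definition phi4 (R : realType) (d : nat) (p : R[i] * R[i]) : R[i] * R[i] * R[i] :=
  (p.1^-1 + d%:R * p.2^-1, p.1 + d%:R * p.2, p.1 ^+ 2 + d%:R * p.2 ^+ 2).

Definition torus2 (R : realType) : pred (R[i] * R[i]) :=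
  fun p => (p.1 != 0) && (p.2 != 0).

(* If y <> y', the second and third coordinates force x + x' = y + y' and the
   first and second force x x' = y y', so {x, x'} = {y, y'}.  Both matchings
   contradict the second coordinate x + d y, because d <> 1 and d <> -1. *)
From HB Require Import structures.
From mathcomp Require Import all_boot all_order all_algebra.
From mathcomp Require Import complex.
From mathcomp Require Import reals.
From mathcomp Require Import ring.
Set Implicit Arguments. Unset Strict Implicit. Unset Printing Implicit Defensive.
Local Open Scope ring_scope.
Import Order.TTheory GRing.Theory Num.Theory.

Lemma same_sum_prod (R : idomainType) (x x' y y' : R) :
  x + x' = y + y' -> x * x' = y * y' -> (x = y /\ x' = y') \/ (x = y' /\ x' = y).
Proof.
move=> es ep.
have : (x - y) * (x - y') = 0.
  have -> : (x - y) * (x - y') = x ^+ 2 - x * (y + y') + y * y' by ring.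
  by rewrite -es -ep; ring.
move/eqP; rewrite mulf_eq0 !subr_eq0 => /orP[/eqP exy | /eqP exy'].
  by left; split=> //; apply: (addrI x); rewrite es exy.
by right; split=> //; apply: (addrI x); rewrite es exy' addrC.
Qed.

Section PhiInjective.

Variables (F : fieldType) (D : F).
Hypothesis D_neq0 : D != 0.

Definition phi (p : F * F) : F * F * F :=
  (p.1^-1 + D * p.2^-1, p.1 + D * p.2, p.1 ^+ 2 + D * p.2 ^+ 2).

Lemma sum_eq_of_phi_eq (x y x' y' : F) :
  x + D * y = x' + D * y' -> x ^+ 2 + D * y ^+ 2 = x' ^+ 2 + D * y' ^+ 2 ->
  y != y' -> x + x' = y + y'.
Proof.
move=> e2 e3 neq_y.
have : D * (y - y') * ((y + y') - (x + x')) = 0.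
  have -> : D * (y - y') * ((y + y') - (x + x')) =
      (x ^+ 2 + D * y ^+ 2) - (x' ^+ 2 + D * y' ^+ 2)
      - ((x + D * y) - (x' + D * y')) * (x + x') by ring.
  by rewrite e2 e3 !subrr mul0r subr0.
move/eqP; rewrite !mulf_eq0 !subr_eq0 (negbTE D_neq0) (negbTE neq_y) /=.
by move=> /eqP ->.
Qed.

Lemma prod_eq_of_phi_eq (x y x' y' : F) :
  x != 0 -> y != 0 -> x' != 0 -> y' != 0 ->
  x^-1 + D * y^-1 = x'^-1 + D * y'^-1 -> x + D * y = x' + D * y' ->
  y != y' -> x * x' = y * y'.
Proof.
move=> x_neq0 y_neq0 x'_neq0 y'_neq0 e1 e2 neq_y.
have : D * (y - y') * (y * y' - x * x') = 0.
  have -> : D * (y - y') * (y * y' - x * x') =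
      x * x' * y * y' * ((x^-1 + D * y^-1) - (x'^-1 + D * y'^-1))
      + y * y' * ((x + D * y) - (x' + D * y')).
    by field; rewrite x_neq0 x'_neq0 y_neq0 y'_neq0.
  by rewrite e1 e2 !subrr !mulr0 addr0.
move/eqP; rewrite !mulf_eq0 !subr_eq0 (negbTE D_neq0) (negbTE neq_y) /=.
by move=> /eqP ->.
Qed.

Lemma phi_injective : D != 1 -> D != -1 ->
  {in [pred p : F * F | (p.1 != 0) && (p.2 != 0)] &, injective phi}.
Proof.
move=> D_neq1 D_neqN1 [x y] [x' y'] /andP[/= x_neq0 y_neq0].
move=> /andP[/= x'_neq0 y'_neq0] [e1 e2 e3].
have [eq_y|neq_y] := eqVneq y y'; first by subst y'; move/addIr: e2 => ->.
have dy_neq0 : y - y' != 0 by rewrite subr_eq0.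
have [[ex ex'] | [ex ex']] := same_sum_prod (sum_eq_of_phi_eq e2 e3 neq_y)
  (prod_eq_of_phi_eq x_neq0 y_neq0 x'_neq0 y'_neq0 e1 e2 neq_y).
all: rewrite {}ex {}ex' in e2.
- have : (D + 1) * (y - y') != 0 by rewrite mulf_neq0 // addr_eq0.
  have -> : (D + 1) * (y - y') = (y + D * y) - (y' + D * y') by ring.
  by rewrite e2 subrr eqxx.
- have : (D - 1) * (y - y') != 0 by rewrite mulf_neq0 // subr_eq0.
  have -> : (D - 1) * (y - y') = (y' + D * y) - (y + D * y') by ring.
  by rewrite e2 subrr eqxx.
Qed.

End PhiInjective.

Theorem lemma4p4 (R : realType) (d : nat) (hd : (2 <= d)%N) :
  {in @torus2 R &, injective (@phi4 R d)}.
Proof.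
move=> p q tp tq; apply: (phi_injective (D := d%:R)) tp tq.
- by rewrite pnatr_eq0 -lt0n ltnW.
- by rewrite pnatr_eq1 gtn_eqF.
- by rewrite gt_eqF // (lt_le_trans (ltrN10 _) (ler0n _ _)).
Qed.
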